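(* Let $g\ge0$, let $\mu,\nu$ be partitions of $n\ge1$ with $g-1+\ell(\mu)+\ell(\nu)>0$, and let $\Gamma$ be a twisted monodromy graph of type $(g,\mu,\nu)$. Then $\Gamma$ has at most $g+1$ $4$-valent vertices.
   Context: A twisted monodromy graph of type $(g,\mu,\nu)$ is a connected directed graph $\Gamma$ of genus (first Betti number) $g$ whose inner vertices are $3$- or $4$-valent, together with an involution $\iota$ of $\Gamma$ whose fixed points are exactly the $4$-valent vertices, such that: $\Gamma$ has $2\ell(\mu)$ inward ends with weights $\mu_i$ and $2\ell(\nu)$ outward ends with weights $\nu_j$, ends exchanged by $\iota$ having the same weight; no inner vertex is a sink or a source; every bounded edge carries a positive integer weight satisfying balancing (at each inner vertex the weights of incoming edges sum to the weights of outgoing edges); the four edges at a $4$-valent vertex have the same weight; $\iota$ preserves weights; and the $\iota$-orbits of inner vertices are totally ordered compatibly with the edge directions. *)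

From mathcomp Require Import all_boot.
Set Implicit Arguments. Unset Strict Implicit. Unset Printing Implicit Defensive.

(* mu is a partition of n: a finite sequence of positive integers summing to n
   (the order of the parts is irrelevant everywhere below). *)
Definition is_partition (n : nat) (mu : seq nat) : bool :=
  all (fun k => 0 < k) mu && (sumn mu == n).

(* A directed graph with ends:
   - V : inner vertices, E : bounded edges (src e -> tgt e),
   - I : inward ends (each ends at the inner vertex inEnd x),
   - O : outward ends (each starts at the inner vertex outEnd y),
   with positive-integer weights, together with an involution iota acting
   compatibly on vertices, bounded edges and ends (a directed-graph
   automorphism of order <= 2). *)
Record twisted_graph := TwistedGraph {
  V : finType; E : finType; I : finType; O : finType;
  src : E -> V; tgt : E -> V;
  inEnd : I -> V; outEnd : O -> V;
  wE : E -> nat; wI : I -> nat; wO : O -> nat;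
  iV : V -> V; iE : E -> E; iI : I -> I; iO : O -> O;
  ord : V -> nat  (* ranking of the iota-orbits of inner vertices *)
}.

Section Defs.
Variable G : twisted_graph.

Definition valency (v : V G) : nat :=
  #|[set e | src e == v]| + #|[set e | tgt e == v]|
  + #|[set x | inEnd x == v]| + #|[set y | outEnd y == v]|.

Definition adjacent : rel (V G) :=
  fun u v => [exists e, ((src e == u) && (tgt e == v)) || ((src e == v) && (tgt e == u))].

Definition connected_graph : Prop := forall u v : V G, connect adjacent u v.

(* first Betti number of a connected graph (ends are leaves and do not
   contribute): #bounded edges - #inner vertices + 1 = g *)
Definition has_genus (g : nat) : Prop := #|E G| + 1 = #|V G| + g.

Definition balanced (v : V G) : Prop :=
  \sum_(e | tgt e == v) wE e + \sum_(x | inEnd x == v) wI x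
  = \sum_(e | src e == v) wE e + \sum_(y | outEnd y == v) wO y.

Definition not_sink_source (v : V G) : Prop :=
  ([exists e, tgt e == v] || [exists x, inEnd x == v]) /\
  ([exists e, src e == v] || [exists y, outEnd y == v]).

Definition equal_weights_at (v : V G) : Prop :=
  exists c, (forall e, (src e == v) || (tgt e == v) -> wE e = c) /\
            (forall x, inEnd x == v -> wI x = c) /\
            (forall y, outEnd y == v -> wO y = c).

Definition is_twisted_monodromy_graph (g : nat) (mu nu : seq nat) : Prop :=
  connected_graph /\ has_genus g
  /\ (forall v : V G, valency v = 3 \/ valency v = 4)
  /\ involutive (@iV G) /\ involutive (@iE G) /\ involutive (@iI G)
  /\ involutive (@iO G)
  /\ (forall e : E G, src (iE e) = iV (src e) /\ tgt (iE e) = iV (tgt e))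
  /\ (forall x : I G, inEnd (iI x) = iV (inEnd x))
  /\ (forall y : O G, outEnd (iO y) = iV (outEnd y))
  /\ (forall v : V G, iV v = v <-> valency v = 4)
  /\ (forall e : E G, iE e <> e) /\ (forall x : I G, iI x <> x) /\ (forall y : O G, iO y <> y)
  (* ends: 2 l(mu) inward ends with weights mu_i, 2 l(nu) outward ends with
     weights nu_j (each part once per iota-pair of ends); iota preserves weights *)
  /\ perm_eq [seq wI x | x <- enum (I G)] (mu ++ mu)
  /\ perm_eq [seq wO y | y <- enum (O G)] (nu ++ nu)
  /\ (forall e : E G, wE (iE e) = wE e) /\ (forall x : I G, wI (iI x) = wI x)
  /\ (forall y : O G, wO (iO y) = wO y)
  /\ (forall e : E G, 0 < wE e)
  /\ (forall v : V G, balanced v)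
  /\ (forall v : V G, not_sink_source v)
  /\ (forall v : V G, valency v = 4 -> equal_weights_at v)
  (* ord ranks the iota-orbits injectively (i.e. a total order on the orbits)
     and strictly increases along every bounded edge *)
  /\ (forall v : V G, ord (iV v) = ord v)
  /\ (forall u v : V G, ord u = ord v -> u = v \/ u = iV v)
  /\ (forall e : E G, ord (src e) < ord (tgt e)).

Definition four_valent : {set V G} := [set v | valency v == 4].

End Defs.

From mathcomp Require Import all_boot zify.
Set Implicit Arguments. Unset Strict Implicit. Unset Printing Implicit Defensive.

(* The involution iota acts freely on bounded edges and fixes exactly the
   4-valent vertices, so counting orbits gives 2 |V/iota| = |V| + #fixed and
   2 |E/iota| = |E|.  The quotient graph Gamma/iota is connected, hence has at
   most |E/iota| + 1 vertices (a breadth-first spanning tree), and therefore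
   #fixed <= |E| + 2 - |V| = g + 1. *)

Section OrbitRepresentatives.
Variables (T : finType) (f : T -> T).
Hypothesis f_inv : involutive f.

Definition orbit_reps : {set T} := [set x | enum_rank x <= enum_rank (f x)].

Definition orbit_rep (x : T) : T := if x \in orbit_reps then x else f x.

Lemma enum_rank_anti (x y : T) :
  enum_rank x <= enum_rank y -> enum_rank y <= enum_rank x -> x = y.
Proof. by move=> le_xy le_yx; apply/enum_rank_inj/val_inj/anti_leq/andP. Qed.

Lemma orbit_rep_in x : orbit_rep x \in orbit_reps.
Proof.
rewrite /orbit_rep; case: ifP => // /negbT.
by rewrite !inE f_inv -ltnNge => /ltnW.
Qed.

Lemma orbit_repE x : x \in orbit_reps -> orbit_rep x = x.
Proof. by rewrite /orbit_rep => ->. Qed.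

Lemma orbit_rep_f x : orbit_rep (f x) = orbit_rep x.
Proof.
rewrite /orbit_rep !inE f_inv.
case: leqP => [le1|/ltnW le1]; case: leqP => [le2|/ltnW le2] //.
  by rewrite (enum_rank_anti le1 le2).
by rewrite (enum_rank_anti le2 le1).
Qed.

Lemma double_card_orbit_reps :
  2 * #|orbit_reps| = #|T| + #|[set x | f x == x]|.
Proof.
have imset_reps : f @: orbit_reps = [set x | enum_rank (f x) <= enum_rank x].
  by rewrite (can_imset_pre _ f_inv); apply/setP => x; rewrite !inE f_inv.
have cover : orbit_reps :|: f @: orbit_reps = setT.
  by apply/setP => x; rewrite imset_reps !inE leq_total.
have overlap : orbit_reps :&: f @: orbit_reps = [set x | f x == x].
  apply/setP => x; rewrite imset_reps !inE; apply/idP/eqP => [/andP[le1 le2]|->].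
    exact: enum_rank_anti.
  by rewrite leqnn.
have := cardsUI orbit_reps (f @: orbit_reps).
by rewrite cover overlap cardsT card_imset ?addnn ?mul2n //; apply: can_inj f_inv.
Qed.

End OrbitRepresentatives.

Lemma orbit_rep_equivariant (U T : finType) (h : U -> U) (f : T -> T) (k : U -> T) :
  involutive f -> (forall u, k (h u) = f (k u)) ->
  forall u, orbit_rep f (k (orbit_rep h u)) = orbit_rep f (k u).
Proof.
move=> f_inv hk u; rewrite {2}/orbit_rep.
by case: ifP => // _; rewrite hk orbit_rep_f.
Qed.

Lemma connect_homo (T U : finType) (e : rel T) (e' : rel U) (k : T -> U) :
  (forall x y, e x y -> connect e' (k x) (k y)) ->
  forall x y, connect e x y -> connect e' (k x) (k y).
Proof.
move=> hk x y /connectP[p + ->]; elim: p x => [|z p IH] x /=.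
  by rewrite connect0.
by case/andP=> /hk exz /IH; apply: connect_trans.
Qed.

Section SpanningTree.
Variables (T E : finType) (F : {set E}) (a b : E -> T).

Definition linked : rel T := fun u v =>
  [exists e in F, ((a e == u) && (b e == v)) || ((a e == v) && (b e == u))].

Definition upper_end (d : T -> nat) (e : E) : T :=
  if d (a e) < d (b e) then b e else a e.

Lemma linked_upper_end (d : T -> nat) u v :
  linked u v -> d u < d v -> exists2 e, e \in F & upper_end d e = v.
Proof.
case/exists_inP=> e eF /orP[] /andP[/eqP <- /eqP <-] lt_d; exists e => //.
  by rewrite /upper_end lt_d.
by rewrite /upper_end ltnNge ltnW.
Qed.

Lemma card_le_descending (d : T -> nat) (S : {set T}) r :
  (forall v, v \in S -> v != r -> exists2 e, e \in F & upper_end d e = v) ->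
  #|S| <= #|F| + 1.
Proof.
move=> descend; rewrite (cardsD1 r) addnC leq_add ?leq_b1 //.
apply: leq_trans (leq_imset_card (upper_end d) F); apply/subset_leq_card.
apply/subsetP=> v; rewrite !inE => /andP[vr vS].
by have [e eF <-] := descend v vS vr; apply: imset_f.
Qed.

Fixpoint ball (r : T) (n : nat) : {set T} :=
  if n is m.+1 then ball r m :|: [set v | [exists u in ball r m, linked u v]]
  else [set r].

Lemma path_last_ball r n x p :
  x \in ball r n -> path linked x p -> last x p \in ball r (n + size p).
Proof.
elim: p n x => [|y p IH] n x /=; first by rewrite addn0.
move=> x_in /andP[lxy lp]; rewrite addnS -addSn; apply: IH lp.
by rewrite /= !inE; apply/orP; right; apply/exists_inP; exists x.
Qed.

Lemma connect_ball r v : connect linked r v -> exists n, v \in ball r n.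
Proof.
case/connectP=> p lp ->; exists (0 + size p).
by apply: path_last_ball lp; rewrite inE.
Qed.

Lemma connected_card_le (S : {set T}) r :
  (forall v, v \in S -> connect linked r v) -> #|S| <= #|F| + 1.
Proof.
move=> conn.
have ball_ex v : exists n, (v \in S) ==> (v \in ball r n).
  case vS: (v \in S); last by exists 0.
  by have [n vn] := connect_ball (conn v vS); exists n.
(* breadth-first distance from r: a vertex at distance m.+1 has a neighbour
   at distance at most m, which makes d descend towards r *)
pose d v := ex_minn (ball_ex v).
have d_min v n : v \in ball r n -> d v <= n.
  by move=> vn; rewrite /d; case: ex_minnP => m _; apply; rewrite vn implybT.
apply: (@card_le_descending d S r) => v vS vr.
have: (v \in S) ==> (v \in ball r (d v)) by rewrite /d; case: ex_minnP.
rewrite vS /=; case Edv: (d v) => [|m] /=; first by rewrite inE (negbTE vr).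
rewrite inE => /orP[vm|]; first by have := d_min _ _ vm; rewrite Edv ltnn.
rewrite inE => /exists_inP[u um luv]; apply: (linked_upper_end luv).
by rewrite Edv ltnS d_min.
Qed.

End SpanningTree.

Section Quotient.
Variable G : twisted_graph.
Hypotheses (iV_inv : involutive (@iV G)) (iE_inv : involutive (@iE G)).
Hypothesis iE_ends : forall e : E G, src (iE e) = iV (src e) /\ tgt (iE e) = iV (tgt e).

Let quotient_src (e : E G) : V G := orbit_rep (@iV G) (src e).
Let quotient_tgt (e : E G) : V G := orbit_rep (@iV G) (tgt e).
Let quotient_linked := linked (orbit_reps (@iE G)) quotient_src quotient_tgt.

Lemma adjacent_quotient_linked u v :
  adjacent u v -> quotient_linked (orbit_rep (@iV G) u) (orbit_rep (@iV G) v).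
Proof.
have rep_src e : quotient_src (orbit_rep (@iE G) e) = quotient_src e.
  by apply: orbit_rep_equivariant => // e'; case: (iE_ends e').
have rep_tgt e : quotient_tgt (orbit_rep (@iE G) e) = quotient_tgt e.
  by apply: orbit_rep_equivariant => // e'; case: (iE_ends e').
case/existsP=> e uv_e; apply/exists_inP; exists (orbit_rep (@iE G) e).
  exact: orbit_rep_in.
rewrite rep_src rep_tgt /quotient_src /quotient_tgt.
by case/orP: uv_e => /andP[/eqP-> /eqP->]; rewrite !eqxx ?orbT.
Qed.

Lemma card_vertex_orbits_le :
  connected_graph G -> #|orbit_reps (@iV G)| <= #|orbit_reps (@iE G)| + 1.
Proof.
move=> conn; have [->|[r r_rep]] := set_0Vmem (orbit_reps (@iV G)).
  by rewrite cards0.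
apply: (connected_card_le (r := r)) => v v_rep.
rewrite -(orbit_repE r_rep) -(orbit_repE v_rep).
apply: (connect_homo (e := @adjacent G)) (conn r v) => x y /adjacent_quotient_linked.
exact: connect1.
Qed.

End Quotient.

Theorem lemma6p5 (g n : nat) (mu nu : seq nat) (G : twisted_graph) :
  1 <= n -> is_partition n mu -> is_partition n nu ->
  1 < g + size mu + size nu ->
  is_twisted_monodromy_graph G g mu nu ->
  #|four_valent G| <= g + 1.
Proof.
move=> _ _ _ _ [conn [genus [_ [iV_inv [iE_inv [_ [_ [iE_ends [_ [_
  [fixed_iff_4 [iE_fixfree _]]]]]]]]]]]].
have four_valent_fixed : four_valent G = [set v | iV v == v].
  by apply/setP=> v; rewrite !inE; apply/eqP/eqP => /fixed_iff_4.
have no_fixed_edge : [set e : E G | iE e == e] = set0.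
  by apply/setP=> e; rewrite !inE; apply/eqP/iE_fixfree.
have cardV := double_card_orbit_reps iV_inv.
have cardE := double_card_orbit_reps iE_inv.
rewrite no_fixed_edge cards0 addn0 in cardE.
have := card_vertex_orbits_le iV_inv iE_inv iE_ends conn.
rewrite four_valent_fixed; rewrite /has_genus in genus; lia.
Qed.
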